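(* Let $n\geq 3$ and let $\rho>0$, $q>0$ be constants. Let $(m,\mathbf{U})$ lie in the interior of the convex hull $K_{\rho,q}^{\mathrm{co}}$. Then there exist $\bar m\in\mathbb{R}^n$ and $\bar{\mathbf{U}}\in\mathbb{S}_0^{n\times n}$ such that the closed segment with endpoints $(m-\bar m,\mathbf{U}-\bar{\mathbf{U}})$ and $(m+\bar m,\mathbf{U}+\bar{\mathbf{U}})$ is contained in the interior of $K_{\rho,q}^{\mathrm{co}}$ and is parallel to $$\Big(a,\frac{a\otimes a}{\rho}\Big)-\Big(b,\frac{b\otimes b}{\rho}\Big)$$ for some $a,b\in\mathbb{R}^n$ with $|a|=|b|=\sqrt{n\rho q}$. Moreover, $$|\bar m|\geq\frac{C}{\sqrt{n\rho q}}\big(n\rho q-|m|^2\big),$$ where $C>0$ is a constant depending only on $n$.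
   Context: $\mathbb{S}_0^{n\times n}$ denotes the real symmetric trace-free $n\times n$ matrices. For constants $\rho,q>0$, $$K_{\rho,q}=\Big\{(m,\mathbf{U})\in\mathbb{R}^n\times\mathbb{S}_0^{n\times n}:\frac{m\otimes m}{\rho}-\mathbf{U}=q\mathbf{I}_n\Big\}$$ (equivalently $|m|=\sqrt{n\rho q}$ and $\mathbf{U}=\frac{m\otimes m}{\rho}-\frac{|m|^2}{n\rho}\mathbf{I}_n$), and $K_{\rho,q}^{\mathrm{co}}$ is its convex hull in $\mathbb{R}^n\times\mathbb{S}_0^{n\times n}$. *)

From HB Require Import structures.
From mathcomp Require Import all_boot all_order all_algebra.
From mathcomp Require Import reals.
Set Implicit Arguments. Unset Strict Implicit. Unset Printing Implicit Defensive.
Import Order.TTheory GRing.Theory Num.Theory.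
Local Open Scope ring_scope.

Section Defs.
Variables (R : realType) (n : nat).

Definition sqnorm (m : 'rV[R]_n) : R := \sum_(i < n) m 0 i ^+ 2.
Definition vnorm (m : 'rV[R]_n) : R := Num.sqrt (sqnorm m).
Definition frob2 (U : 'M[R]_n) : R := \sum_(i < n) \sum_(j < n) U i j ^+ 2.
Definition outer (m : 'rV[R]_n) : 'M[R]_n := m^T *m m.

Definition sym0 (U : 'M[R]_n) : Prop := U^T = U /\ \tr U = 0.

Definition Kset (rho q : R) (p : 'rV[R]_n * 'M[R]_n) : Prop :=
  sym0 p.2 /\ rho^-1 *: outer p.1 - p.2 = q%:M.

Definition convhull (A : 'rV[R]_n * 'M[R]_n -> Prop)
  (p : 'rV[R]_n * 'M[R]_n) : Prop :=
  exists (k : nat) (lam : 'I_k -> R) (x : 'I_k -> 'rV[R]_n * 'M[R]_n),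
    (forall i, 0 <= lam i) /\ \sum_(i < k) lam i = 1 /\
    (forall i, A (x i)) /\
    p.1 = \sum_(i < k) lam i *: (x i).1 /\
    p.2 = \sum_(i < k) lam i *: (x i).2.

(* interior of A as a subset of the space R^n x S_0^{n x n}
   (Euclidean topology, distance^2 = |m - m'|^2 + |U - U'|_F^2) *)
Definition interior_pt (A : 'rV[R]_n * 'M[R]_n -> Prop)
  (p : 'rV[R]_n * 'M[R]_n) : Prop :=
  sym0 p.2 /\
  exists eps : R, 0 < eps /\
    forall p' : 'rV[R]_n * 'M[R]_n, sym0 p'.2 ->
      sqnorm (p'.1 - p.1) + frob2 (p'.2 - p.2) < eps ^+ 2 -> A p'.

Definition Kco (rho q : R) := convhull (Kset rho q).

End Defs.

From HB Require Import structures.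
From mathcomp Require Import all_boot all_order all_algebra.
From mathcomp Require Import reals ring lra.

(* By Caratheodory, (m, U) is a convex combination sum_i lam_i z_i of at most
   N = 1 + n + n^2 points z_i = (a_i, a_i (x) a_i / rho - q I) of K.  As
   |a_i|^2 = n rho q =: r^2 and |a_i - a_j| <= 2 r,
     r^2 - |m|^2 = 1/2 sum_(i,j) lam_i lam_j |a_i - a_j|^2
                 <= N^2 r max_(i,j) lam_i lam_j |a_i - a_j|.
   Moving a weight u with |u| <= lam_i lam_j from z_j to z_i keeps a convex combination, so
   K^co contains the segment (m, U) + u (z_i - z_j), |u| <= lam_i lam_j; averaging it with a
   ball around the interior point (m, U) puts its middle half in the interior.  The maximising
   pair then gives |mb| = lam_i lam_j |a_i - a_j| / 2 with C = 1 / (2 N^2). *)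

Set Implicit Arguments. Unset Strict Implicit. Unset Printing Implicit Defensive.
Import Order.TTheory GRing.Theory Num.Theory.
Local Open Scope ring_scope.

Lemma row_dependent (F : fieldType) (k d : nat) (M : 'M[F]_(k, d)) :
  (d < k)%N -> exists2 v : 'rV_k, v != 0 & v *m M = 0.
Proof.
move=> lt_dk; have : kermx M != 0.
  by rewrite kermx_eq0 -row_leq_rank -ltnNge (leq_ltn_trans (rank_leq_col M)).
by case/rowV0Pn=> v /sub_kermxP vM v_neq0; exists v.
Qed.

Section ConvexHull.
Variables (R : realType) (n : nat).
Implicit Types (A : 'rV[R]_n * 'M[R]_n -> Prop) (p : 'rV[R]_n * 'M[R]_n).

Definition convex_rep A p k (lam : 'I_k -> R) (x : 'I_k -> 'rV[R]_n * 'M[R]_n) :=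
  (forall i, 0 <= lam i) /\ \sum_(i < k) lam i = 1 /\
  (forall i, A (x i)) /\
  p.1 = \sum_(i < k) lam i *: (x i).1 /\
  p.2 = \sum_(i < k) lam i *: (x i).2.

Lemma convhull_convex A p1 p2 (th : R) :
  0 <= th <= 1 -> convhull A p1 -> convhull A p2 ->
  convhull A (th *: p1.1 + (1 - th) *: p2.1, th *: p1.2 + (1 - th) *: p2.2).
Proof.
move=> /andP[th_ge0 th_le1] [k1 [l1 [x1 [l1_ge0 [l1_sum [x1A [p1_1 p1_2]]]]]]]
  [k2 [l2 [x2 [l2_ge0 [l2_sum [x2A [p2_1 p2_2]]]]]]].
pose lam i := match split i with inl a => th * l1 a | inr b => (1 - th) * l2 b end.
pose x i := match split i with inl a => x1 a | inr b => x2 b end.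
have splitl a : split (lshift k2 a) = inl a by exact: (unsplitK (inl a)).
have splitr b : split (rshift k1 b) = inr b by exact: (unsplitK (inr b)).
have sum_lam (V : lmodType R) (f : 'rV[R]_n * 'M[R]_n -> V) :
    \sum_i lam i *: f (x i) =
    th *: \sum_a l1 a *: f (x1 a) + (1 - th) *: \sum_b l2 b *: f (x2 b).
  rewrite big_split_ord !scaler_sumr /lam /x.
  by congr (_ + _); apply: eq_bigr => ? _; rewrite ?splitl ?splitr scalerA.
exists (k1 + k2)%N, lam, x; split; last split; last split; last split.
- move=> i; rewrite /lam; case: (split i) => a; apply: mulr_ge0 => //.
  by rewrite subr_ge0.
- rewrite big_split_ord /= /lam.
  under eq_bigr => a _ do rewrite splitl.
  under [X in _ + X]eq_bigr => b _ do rewrite splitr.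
  by rewrite -!mulr_sumr l1_sum l2_sum !mulr1 addrC subrK.
- by move=> i; rewrite /x; case: (split i).
- by rewrite (sum_lam _ fst) p1_1 p2_1.
- by rewrite (sum_lam _ snd) p1_2 p2_2.
Qed.

Definition hull_coords p : 'rV[R]_(1 + (n + n * n)) :=
  row_mx (const_mx 1) (row_mx p.1 (mxvec p.2)).

Lemma affine_dependent k (x : 'I_k -> 'rV[R]_n * 'M[R]_n) :
  (1 + (n + n * n) < k)%N ->
  exists mu : 'I_k -> R, (exists j, mu j != 0) /\ \sum_i mu i = 0 /\
    \sum_i mu i *: (x i).1 = 0 /\ \sum_i mu i *: (x i).2 = 0.
Proof.
pose M := \matrix_i hull_coords (x i).
move=> lt_Nk; have [v v_neq0 vM] := row_dependent M lt_Nk.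
have coord0 c : \sum_i v 0 i * hull_coords (x i) 0 c = 0.
  apply: (@etrans _ _ ((v *m M) 0 c)); last by rewrite vM mxE.
  by rewrite mxE; apply: eq_bigr => i _; rewrite /M [in RHS]mxE.
exists (v 0); split; last split; last split.
- apply/existsP; move: v_neq0; apply: contraNT => /existsPn v0.
  by apply/eqP/rowP => j; rewrite mxE; apply/eqP/negbNE.
- rewrite -[RHS](coord0 (lshift _ 0)); apply: eq_bigr => i _.
  by rewrite /hull_coords row_mxEl mxE mulr1.
- apply/rowP => a; rewrite summxE mxE -[RHS](coord0 (rshift 1 (lshift _ a))).
  by apply: eq_bigr => i _; rewrite /hull_coords row_mxEr row_mxEl mxE.
- apply/matrixP => a b; rewrite summxE mxE.
  rewrite -[RHS](coord0 (rshift 1 (rshift n (mxvec_index a b)))).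
  by apply: eq_bigr => i _; rewrite /hull_coords !row_mxEr mxvecE mxE.
Qed.

Lemma convex_rep_shrink A p k (lam : 'I_k.+1 -> R) x : (1 + (n + n * n) < k.+1)%N ->
  convex_rep A p lam x -> exists lam' x', @convex_rep A p k lam' x'.
Proof.
move=> lt_Nk [lam_ge0 [lam_sum [xA [p1 p2]]]].
have [mu [[j0 mu_j0] [mu_sum [mu_x1 mu_x2]]]] := affine_dependent x lt_Nk.
have [jp mu_jp] : exists j, 0 < mu j.
  apply/existsP; apply: contraLR mu_j0 => /existsPn mu_le0; apply/negPn/eqP.
  have mu_le0' i : 0 <= - mu i by rewrite oppr_ge0 leNgt mu_le0.
  have := psumr_eq0P (P := xpredT) (fun i _ => mu_le0' i).
  by rewrite sumrN mu_sum oppr0 => /(_ erefl j0 erefl)/eqP; rewrite oppr_eq0 => /eqP.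
(* the largest step along -mu keeping all weights nonnegative kills weight j *)
case: (@Order.TotalTheory.arg_minP _ _ _ jp (fun i => 0 < mu i) (fun i => lam i / mu i)
  mu_jp) => j mu_j t_min.
set t := lam j / mu j.
have t_ge0 : 0 <= t by rewrite divr_ge0 // ltW.
pose lam' i := lam i - t * mu i.
have lam'_j : lam' j = 0 by rewrite /lam' /t mulfVK ?subrr // gt_eqF.
have lam'_ge0 i : 0 <= lam' i.
  rewrite /lam' subr_ge0; have [mu_i|] := ltP 0 (mu i).
    by rewrite -ler_pdivlMr // t_min.
  by move=> mu_i; apply: le_trans (lam_ge0 i); rewrite mulr_ge0_le0.
have sum_lam' (V : lmodType R) (f : 'I_k.+1 -> V) :
    \sum_i mu i *: f i = 0 -> \sum_i lam' i *: f i = \sum_i lam i *: f i.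
  move=> mu_f; under eq_bigr => i _ do rewrite scalerBl -scalerA.
  by rewrite sumrB -scaler_sumr mu_f scaler0 subr0.
have drop_j (V : lmodType R) (f : 'I_k.+1 -> V) :
    \sum_i lam' i *: f i = \sum_a lam' (lift j a) *: f (lift j a).
  by rewrite (bigD1_ord j) //= lam'_j scale0r add0r.
exists (fun a => lam' (lift j a)), (fun a => x (lift j a)).
split; last split; last split; last split.
- by move=> a; apply: lam'_ge0.
- have lam'_sum : \sum_i lam' i = 1 by rewrite sumrB -mulr_sumr mu_sum mulr0 subr0.
  by rewrite -lam'_sum (bigD1_ord j) //= lam'_j add0r.
- by move=> a; apply: xA.
- by rewrite -(drop_j _ (fun i => (x i).1)) sum_lam'.
- by rewrite -(drop_j _ (fun i => (x i).2)) sum_lam'.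
Qed.

Lemma caratheodory A p : convhull A p ->
  exists k lam x, (k <= 1 + (n + n * n))%N /\ @convex_rep A p k lam x.
Proof.
case=> k [lam [x]]; elim: k lam x => [|k IHk] lam x rep; first by exists 0%N, lam, x.
have [le_kN|lt_Nk] := leqP k.+1 (1 + (n + n * n)); first by exists k.+1, lam, x.
by have [lam' [x' rep']] := convex_rep_shrink lt_Nk rep; apply: IHk rep'.
Qed.

Lemma convhull_shift_weight A p k lam x (i j : 'I_k) (u : R) :
  convex_rep A p lam x -> `|u| <= lam i * lam j ->
  convhull A (p.1 + u *: ((x i).1 - (x j).1), p.2 + u *: ((x i).2 - (x j).2)).
Proof.
move=> [lam_ge0 [lam_sum [xA [p1 p2]]]] le_u.
have lam_le1 l : 0 <= 1 - lam l.
  by rewrite subr_ge0 -lam_sum (bigD1 l) //= lerDl sumr_ge0.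
pose d l := (if l == i then u else 0) - (if l == j then u else 0).
have pick_sum (V : lmodType R) (l0 : 'I_k) (f : 'I_k -> V) :
    \sum_l (if l == l0 then u else 0) *: f l = u *: f l0.
  by rewrite (bigD1 l0) //= eqxx big1 ?addr0 // => l /negbTE ->; rewrite scale0r.
have d_sum (V : lmodType R) (f : 'I_k -> V) :
    \sum_l (lam l + d l) *: f l = \sum_l lam l *: f l + u *: (f i - f j).
  under eq_bigr do rewrite scalerDl scalerBl.
  by rewrite big_split sumrB /= !pick_sum scalerBr.
exists k, (fun l => lam l + d l), x; split; last split; last split; last split.
- move=> l; have := ler_norm u; have := ler_norm (- u); rewrite normrN /d.
  have [->|ne_li] := eqVneq l i.
    have [->|ne_ij] := eqVneq i j; first by rewrite subrr addr0.
    have := mulr_ge0 (lam_ge0 i) (lam_le1 j); rewrite subr0; nra.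
  have [->|ne_lj] := eqVneq l j; last by rewrite subrr addr0.
  have := mulr_ge0 (lam_ge0 j) (lam_le1 i); rewrite sub0r; nra.
- by rewrite big_split /= lam_sum sumrB -!big_mkcond !big_pred1_eq subrr addr0.
- by [].
- by rewrite (d_sum _ (fun l => (x l).1)) p1.
- by rewrite (d_sum _ (fun l => (x l).2)) p2.
Qed.

End ConvexHull.

Section Norms.
Variables (R : realType) (n : nat).
Implicit Types (a b v : 'rV[R]_n) (M : 'M[R]_n).

Definition dot a b := \sum_(i < n) a 0 i * b 0 i.

Lemma sqnorm_ge0 v : 0 <= sqnorm v.
Proof. by apply: sumr_ge0 => i _; apply: sqr_ge0. Qed.

Lemma sqnormZ (c : R) v : sqnorm (c *: v) = c ^+ 2 * sqnorm v.
Proof. by rewrite /sqnorm mulr_sumr; apply: eq_bigr => i _; rewrite mxE exprMn. Qed.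

Lemma frob2Z (c : R) M : frob2 (c *: M) = c ^+ 2 * frob2 M.
Proof.
rewrite /frob2 mulr_sumr; apply: eq_bigr => i _; rewrite mulr_sumr.
by apply: eq_bigr => j _; rewrite mxE exprMn.
Qed.

Lemma sqnorm0 : sqnorm (0 : 'rV[R]_n) = 0.
Proof. by rewrite -(scale0r 0) sqnormZ expr0n mul0r. Qed.

Lemma frob20 : frob2 (0 : 'M[R]_n) = 0.
Proof. by rewrite -(scale0r 0) frob2Z expr0n mul0r. Qed.

Lemma vnormZ (c : R) v : vnorm (c *: v) = `|c| * vnorm v.
Proof. by rewrite /vnorm sqnormZ sqrtrM ?sqr_ge0 // sqrtr_sqr. Qed.

Lemma vnorm0 : vnorm (0 : 'rV[R]_n) = 0.
Proof. by rewrite /vnorm sqnorm0 sqrtr0. Qed.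

Lemma sqr_vnorm v : vnorm v ^+ 2 = sqnorm v.
Proof. by rewrite sqr_sqrtr // sqnorm_ge0. Qed.

Lemma sqnormB a b : sqnorm (a - b) = sqnorm a + sqnorm b - 2 * dot a b.
Proof.
rewrite /sqnorm /dot mulr_sumr -big_split -sumrB /=; apply: eq_bigr => i _.
by rewrite !mxE; ring.
Qed.

Lemma sqnormB_le a b : sqnorm (a - b) <= 2 * sqnorm a + 2 * sqnorm b.
Proof.
rewrite /sqnorm !mulr_sumr -big_split /=; apply: ler_sum => i _.
by rewrite !mxE; have := sqr_ge0 (a 0 i + b 0 i); nra.
Qed.

Lemma sqnorm_sum k (lam : 'I_k -> R) (v : 'I_k -> 'rV[R]_n) :
  sqnorm (\sum_i lam i *: v i) = \sum_i \sum_j lam i * lam j * dot (v i) (v j).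
Proof.
rewrite /sqnorm /dot.
under eq_bigr => c _ do rewrite summxE expr2 mulr_suml.
rewrite exchange_big /=; apply: eq_bigr => i _.
under eq_bigr => c _ do rewrite mulr_sumr.
rewrite exchange_big /=; apply: eq_bigr => j _.
by rewrite mulr_sumr; apply: eq_bigr => c _; rewrite !mxE; ring.
Qed.

Lemma mxtrace_outer v : \tr (outer v) = sqnorm v.
Proof.
by apply: eq_bigr => i _; rewrite /outer mxE big_ord1 mxE expr2.
Qed.

Lemma sym0D M1 M2 : sym0 M1 -> sym0 M2 -> sym0 (M1 + M2).
Proof.
move=> [tr1 t1] [tr2 t2]; split; first by rewrite linearD /= tr1 tr2.
by rewrite mxtraceD t1 t2 addr0.
Qed.

Lemma sym0Z (c : R) M : sym0 M -> sym0 (c *: M).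
Proof.
by move=> [trM tM]; split; [rewrite linearZ /= trM | rewrite mxtraceZ tM mulr0].
Qed.

Lemma sym0B M1 M2 : sym0 M1 -> sym0 M2 -> sym0 (M1 - M2).
Proof. by move=> s1 s2; apply: sym0D => //; rewrite -scaleN1r; apply: sym0Z. Qed.

Lemma Kset_outer (rho q : R) (z : 'rV[R]_n * 'M[R]_n) :
  Kset rho q z -> rho^-1 *: outer z.1 = q%:M + z.2.
Proof. by case=> _ /eqP; rewrite subr_eq addrC => /eqP. Qed.

Lemma Kset_sqnorm (rho q : R) (z : 'rV[R]_n * 'M[R]_n) : 0 < rho ->
  Kset rho q z -> sqnorm z.1 = n%:R * rho * q.
Proof.
move=> rho_gt0 zK; have := congr1 mxtrace (Kset_outer zK).
rewrite mxtraceZ mxtraceD mxtrace_scalar mxtrace_outer (proj2 (proj1 zK)) addr0.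
move/(canRL (mulKf (invr_neq0 (lt0r_neq0 rho_gt0)))) => ->.
by rewrite invrK -mulr_natl; ring.
Qed.

End Norms.

Section Interior.
Variables (R : realType) (n : nat).
Implicit Types (A : 'rV[R]_n * 'M[R]_n -> Prop) (p : 'rV[R]_n * 'M[R]_n).

Lemma interior_pt_mem A p : interior_pt A p -> A p.
Proof.
case=> sym_p [eps [eps_gt0 ball]]; apply: ball => //.
by rewrite !subrr sqnorm0 frob20 addr0 exprn_gt0.
Qed.

Lemma interior_segment A p vm vU (c : R) :
  interior_pt (convhull A) p -> sym0 vU -> 0 <= c ->
  (forall u, `|u| <= c -> convhull A (p.1 + u *: vm, p.2 + u *: vU)) ->
  forall s, -1 <= s <= 1 ->
  interior_pt (convhull A) (p.1 + s *: ((c / 2) *: vm), p.2 + s *: ((c / 2) *: vU)).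
Proof.
case: p => m U [sU [eps [eps_gt0 ball]]] svU c_ge0 seg s /andP[ge_s le_s] /=.
have sym_seg : sym0 (U + s *: ((c / 2) *: vU)) by apply: sym0D => //; do 2 apply: sym0Z.
split=> //; exists (eps / 2); split=> [|[pm pU] /= spU]; first by rewrite divr_gt0.
set dm := pm - _; set dU := pU - _ => near.
(* (pm, pU) is the midpoint of a point of the eps-ball around (m, U) and a point of the
   segment *)
have far : convhull A (m + 2 *: dm, U + 2 *: dU).
  apply: ball => /=; first by apply: sym0D => //; apply: sym0Z; apply: sym0B.
  rewrite !(addrC m) !(addrC U) !addrK sqnormZ frob2Z -mulrDr.
  have -> : eps ^+ 2 = 2 ^+ 2 * (eps / 2) ^+ 2 by field.
  by rewrite ltr_pM2l // exprn_gt0.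
have on_seg : convhull A (m + (s * c) *: vm, U + (s * c) *: vU).
  by apply: seg; rewrite normrM (ger0_norm c_ge0) ler_piMl // ler_norml ge_s le_s.
have half : 0 <= (2^-1 : R) <= 1 by rewrite invr_ge0 ler0n invf_le1 ?ler1n.
have /= := convhull_convex half far on_seg.
have -> : 2^-1 *: (m + 2 *: dm) + (1 - 2^-1) *: (m + (s * c) *: vm) = pm.
  by apply/rowP => a; rewrite /dm !mxE; field.
have -> : 2^-1 *: (U + 2 *: dU) + (1 - 2^-1) *: (U + (s * c) *: vU) = pU.
  by apply/matrixP => a b; rewrite /dU !mxE; field.
by [].
Qed.

Lemma interior_pair_segment A p k (lam : 'I_k -> R) x (i j : 'I_k) :
  (forall z, A z -> sym0 z.2) ->
  interior_pt (convhull A) p -> convex_rep A p lam x ->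
  forall s, -1 <= s <= 1 ->
  interior_pt (convhull A) (p.1 + s *: ((lam i * lam j / 2) *: ((x i).1 - (x j).1)),
                            p.2 + s *: ((lam i * lam j / 2) *: ((x i).2 - (x j).2))).
Proof.
move=> A_sym p_int rep; have [lam_ge0 [_ [xA _]]] := rep.
apply: interior_segment => //; first by apply: sym0B; apply: A_sym.
  exact: mulr_ge0.
by move=> u; apply: convhull_shift_weight.
Qed.

End Interior.

Section SphereGap.
Variables (R : realType) (n : nat).

Lemma sphere_gap_sum k (lam : 'I_k -> R) (v : 'I_k -> 'rV[R]_n) (r2 : R) :
  \sum_i lam i = 1 -> (forall i, sqnorm (v i) = r2) ->
  r2 - sqnorm (\sum_i lam i *: v i) =
  \sum_i \sum_j lam i * lam j * (sqnorm (v i - v j) / 2).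
Proof.
move=> lam_sum v_sq; rewrite sqnorm_sum.
have half_sq i j : sqnorm (v i - v j) / 2 = r2 - dot (v i) (v j).
  by rewrite sqnormB !v_sq; field.
under [RHS]eq_bigr => i _ do under eq_bigr => j _ do rewrite half_sq mulrBr.
under [RHS]eq_bigr => i _ do rewrite sumrB -mulr_suml -mulr_sumr lam_sum mulr1.
by rewrite sumrB -mulr_suml lam_sum mul1r.
Qed.

Lemma sphere_gap_le_pair k (lam : 'I_k -> R) (v : 'I_k -> 'rV[R]_n) (r : R) :
  0 <= r -> (forall i, 0 <= lam i) -> \sum_i lam i = 1 ->
  (forall i, sqnorm (v i) = r ^+ 2) ->
  exists i j, r ^+ 2 - sqnorm (\sum_i lam i *: v i) <=
              k%:R ^+ 2 * r * (lam i * lam j * vnorm (v i - v j)).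
Proof.
case: k lam v => [|k] lam v r_ge0 lam_ge0 lam_sum v_sq.
  by move: lam_sum; rewrite big_ord0 => /eqP; rewrite eq_sym oner_eq0.
pose F (ij : 'I_k.+1 * 'I_k.+1) := lam ij.1 * lam ij.2 * vnorm (v ij.1 - v ij.2).
case: (@Order.TotalTheory.arg_maxP _ _ _ (ord0, ord0) xpredT F isT) => -[i j] _ F_max.
exists i, j; rewrite sphere_gap_sum //.
(* by |v i' - v j'| <= 2 r and the maximality of F (i, j) *)
have term_le i' j' : lam i' * lam j' * (sqnorm (v i' - v j') / 2) <= r * F (i, j).
  have D_ge0 : 0 <= vnorm (v i' - v j') := sqrtr_ge0 _.
  have D_le : vnorm (v i' - v j') <= 2 * r.
    rewrite -ler_sqr ?nnegrE ?mulr_ge0 // sqr_vnorm.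
    apply: le_trans (sqnormB_le _ _) _; rewrite !v_sq.
    by have -> : (2 * r) ^+ 2 = 2 * r ^+ 2 + 2 * r ^+ 2 by ring.
  have key : 0 <= lam i' * lam j' * vnorm (v i' - v j') * (2 * r - vnorm (v i' - v j')).
    by rewrite !mulr_ge0 // subr_ge0.
  apply: le_trans (ler_wpM2l r_ge0 (F_max (i', j') isT)); rewrite /F /= -sqr_vnorm.
  move: key; move: (lam i' * lam j') (vnorm _) => w D key.
  have -> : w * (D ^+ 2 / 2) = r * (w * D) - w * D * (2 * r - D) / 2 by field.
  by rewrite gerBl divr_ge0.
apply: (le_trans (y := \sum_(i' < k.+1) \sum_(j' < k.+1) r * F (i, j))).
  by apply: ler_sum => i' _; apply: ler_sum => j' _; apply: term_le.
rewrite -/(F (i, j)) sumr_const card_ord sumr_const card_ord.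
by rewrite -mulrnA -natrX -mulrA mulr_natl.
Qed.

End SphereGap.

Lemma rescaled_gap_le (R : realFieldType) (N k r g D : R) :
  0 < N -> 0 < r -> 0 <= k <= N -> 0 <= D -> g <= k ^+ 2 * r * D ->
  (2 * N ^+ 2)^-1 / r * g <= D / 2.
Proof.
move=> N_gt0 r_gt0 /andP[k_ge0 k_le_N] D_ge0 g_le.
apply: le_trans (ler_wpM2l _ g_le) _.
  by rewrite divr_ge0 ?invr_ge0 ?mulr_ge0 ?(ltW N_gt0) ?(ltW r_gt0).
have -> : (2 * N ^+ 2)^-1 / r * (k ^+ 2 * r * D) = (k / N) ^+ 2 * (D / 2).
  by field; rewrite !lt0r_neq0.
rewrite ler_piMl ?divr_ge0 // exprn_ile1 ?divr_ge0 ?(ltW N_gt0) //.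
by rewrite ler_pdivrMr // mul1r.
Qed.

Lemma Kco_pair_segment (R : realType) (n : nat) (rho q : R) m U k (lam : 'I_k -> R) x
    (i j : 'I_k) :
  0 < rho -> interior_pt (Kco rho q) (m, U) -> convex_rep (Kset rho q) (m, U) lam x ->
  exists (mb : 'rV[R]_n) (Ub : 'M[R]_n),
    sym0 Ub /\
    (forall s : R, -1 <= s <= 1 -> interior_pt (Kco rho q) (m + s *: mb, U + s *: Ub)) /\
    (exists (a b : 'rV[R]_n) (t : R),
       vnorm a = Num.sqrt (n%:R * rho * q) /\ vnorm b = Num.sqrt (n%:R * rho * q) /\
       t != 0 /\ mb = t *: (a - b) /\
       Ub = t *: (rho^-1 *: outer a - rho^-1 *: outer b)) /\
    vnorm mb = lam i * lam j * vnorm ((x i).1 - (x j).1) / 2.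
Proof.
move=> rho_gt0 mU_int rep; have [lam_ge0 [_ [xK _]]] := rep.
have x_norm l : vnorm (x l).1 = Num.sqrt (n%:R * rho * q).
  by rewrite /vnorm (Kset_sqnorm rho_gt0 (xK l)).
have [c_gt0|c_le0] := ltP 0 (lam i * lam j); last first.
  have -> : lam i * lam j = 0 by apply/le_anti; rewrite c_le0 mulr_ge0.
  exists 0, 0; split; first by split; rewrite ?trmx0 ?mxtrace0.
  split; first by move=> s _; rewrite !scaler0 !addr0.
  split; last by rewrite vnorm0 !mul0r.
  by exists (x i).1, (x i).1, 1; rewrite !x_norm !subrr !scaler0 oner_neq0.
have Ub_eq : rho^-1 *: outer (x i).1 - rho^-1 *: outer (x j).1 = (x i).2 - (x j).2.
  by rewrite !(Kset_outer (xK _)) opprD addrACA subrr add0r.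
exists ((lam i * lam j / 2) *: ((x i).1 - (x j).1)),
       ((lam i * lam j / 2) *: ((x i).2 - (x j).2)).
split; first by apply/sym0Z/sym0B; [case: (xK i) | case: (xK j)].
split; first exact: (interior_pair_segment i j (fun z zK => proj1 zK) mU_int rep).
split.
  exists (x i).1, (x j).1, (lam i * lam j / 2).
  by rewrite !x_norm Ub_eq mulf_neq0 ?invr_eq0 ?lt0r_neq0.
by rewrite vnormZ ger0_norm ?divr_ge0 ?(ltW c_gt0) // mulrAC.
Qed.

Theorem lemma2p3 (R : realType) (n : nat) : (3 <= n)%N ->
  exists C : R, 0 < C /\
  forall (rho q : R), 0 < rho -> 0 < q ->
  forall (m : 'rV[R]_n) (U : 'M[R]_n),
    interior_pt (Kco rho q) (m, U) ->
    exists (mb : 'rV[R]_n) (Ub : 'M[R]_n),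
      sym0 Ub /\
      (* the closed segment [(m - mb, U - Ub), (m + mb, U + Ub)] lies in the interior *)
      (forall s : R, -1 <= s <= 1 ->
         interior_pt (Kco rho q) (m + s *: mb, U + s *: Ub)) /\
      (* it is parallel to (a, a(x)a/rho) - (b, b(x)b/rho) *)
      (exists (a b : 'rV[R]_n) (t : R),
         vnorm a = Num.sqrt (n%:R * rho * q) /\
         vnorm b = Num.sqrt (n%:R * rho * q) /\
         t != 0 /\
         mb = t *: (a - b) /\
         Ub = t *: (rho^-1 *: outer a - rho^-1 *: outer b)) /\
      C / Num.sqrt (n%:R * rho * q) * (n%:R * rho * q - sqnorm m) <= vnorm mb.
Proof.
move=> n_ge3; set N : R := (1 + (n + n * n))%:R.
have N_gt0 : 0 < N by rewrite ltr0n.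
exists (2 * N ^+ 2)^-1; split; first by rewrite invr_gt0 mulr_gt0 ?exprn_gt0.
move=> rho q rho_gt0 q_gt0 m U mU_int.
set r2 := n%:R * rho * q; set r := Num.sqrt r2.
have r2_gt0 : 0 < r2 by rewrite !mulr_gt0 // ltr0n (leq_trans _ n_ge3).
have r_gt0 : 0 < r by rewrite sqrtr_gt0.
have r_sq : r ^+ 2 = r2 by rewrite sqr_sqrtr // ltW.
have [k [lam [x [le_kN rep]]]] := caratheodory (interior_pt_mem mU_int).
have [lam_ge0 [lam_sum [xK [/= m_eq _]]]] := rep.
have x_sq l : sqnorm (x l).1 = r ^+ 2 by rewrite r_sq; apply: Kset_sqnorm.
have [i [j]] := sphere_gap_le_pair (ltW r_gt0) lam_ge0 lam_sum x_sq.
rewrite -m_eq r_sq => gap_le.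
have [mb [Ub [sym_Ub [seg [par mb_norm]]]]] := Kco_pair_segment i j rho_gt0 mU_int rep.
exists mb, Ub; do 3 split => //; rewrite mb_norm.
apply: rescaled_gap_le gap_le => //; first by rewrite ler0n ler_nat.
by rewrite !mulr_ge0 ?sqrtr_ge0.
Qed.
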